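(* Let $\delta>0$ and $x_0>0$. Call a pair $(x(\cdot),y(\cdot))$ admissible if $y:[0,\infty)\to(0,\infty)$ is Lebesgue measurable and locally bounded and $x:[0,\infty)\to\mathbb{R}$ is the (locally absolutely continuous, Carathéodory) solution on $[0,\infty)$ of \[ \dot x(t)=x(t)\big(1-x(t)\big)-y(t)x(t),\qquad x(0)=x_0 . \] Then there is a decreasing function $\omega:[0,\infty)\to(0,\infty)$ with $\omega(t)\to 0$ as $t\to\infty$ such that for every admissible pair $(x(\cdot),y(\cdot))$ \[ \int_T^{T'}e^{-\delta t}\big[\ln x(t)+\ln y(t)\big]\,dt<\omega(T)\qquad\text{for all }0\le T<T'. \] *)

From HB Require Import structures.
From mathcomp Require Import all_boot all_order all_algebra.
From mathcomp Require Import all_classical all_reals all_analysis.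
Set Implicit Arguments. Unset Strict Implicit. Unset Printing Implicit Defensive.
Import Order.TTheory GRing.Theory Num.Theory.
Import numFieldNormedType.Exports.
Local Open Scope classical_set_scope.
Local Open Scope ring_scope.

(* The real line equipped with the Lebesgue (i.e. completed, Caratheodory)
   sigma-algebra; its carrier is R. *)
Definition LebR (R : realType) :=
  caratheodory_type (R := R) (wlength (R := R) idfun)^*%mu.

Definition leb (R : realType) : set (LebR R) -> \bar R :=
  @completed_lebesgue_measure R.

Definition Icc (R : realType) (a b : R) : set (LebR R) := `[a, b].

Definition admissible_control (R : realType) (y : LebR R -> R) : Prop :=
  measurable_fun (`[0, +oo[ : set (LebR R)) y /\
  (forall t : R, 0 <= t -> 0 < y t) /\
  (forall T : R, 0 <= T -> exists M : R, forall t : R, 0 <= t <= T -> y t <= M).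

(* x is the Caratheodory solution on [0,oo) of
     x' = x (1 - x) - y x,  x(0) = x0,
   i.e. the right-hand side is integrable on every [0,t] and
     x(t) = x0 + int_0^t (x(s)(1 - x(s)) - y(s) x(s)) ds  for all t >= 0
   (equivalently: x locally absolutely continuous with x' = rhs a.e.). *)
Definition caratheodory_solution (R : realType) (x0 : R) (y x : LebR R -> R)
  : Prop :=
  forall t : R, 0 <= t ->
    (@leb R).-integrable (Icc 0 t)
        (fun s => (x s * (1 - x s) - y s * x s)%:E) /\
    ((x t)%:E = x0%:E + \int[@leb R]_(s in (Icc 0 t))
                           (x s * (1 - x s) - y s * x s)%:E)%E.

Definition admissible (R : realType) (x0 : R) (x y : LebR R -> R) : Prop :=
  admissible_control y /\ caratheodory_solution x0 y x.

From HB Require Import structures.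
From mathcomp Require Import all_boot all_order all_algebra.
From mathcomp Require Import all_classical all_reals all_analysis.
From mathcomp Require Import measurable_realfun ring lra.
Set Implicit Arguments. Unset Strict Implicit. Unset Printing Implicit Defensive.
Import Order.TTheory GRing.Theory Num.Theory.
Import numFieldNormedType.Exports.
Local Open Scope classical_set_scope.
Local Open Scope ring_scope.

(* The payoff is dominated pointwise: ln x + ln y = ln (x y) <= x y - 1 <= 1/4 - x',
   since x' = x (1 - x) - y x and (x - 1/2)^2 >= 0.  The majorant 1/4 - x' is
   nonnegative, and on a window ]a, b] of length at most 1 its discounted integral
   is at most e^(-delta a) (1/4 + x(a) - x(b)) <= e^(-delta a) (1/4 + x0 + a/4),
   because x stays positive (x' = x (1 - x - y) with a locally bounded factor) and
   x' <= 1/4.  Summing over consecutive unit windows gives a bound C e^(-delta T/2). *)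

Section integral_majorant.
Local Open Scope ereal_scope.
Context d (T : measurableType d) (R : realType) (mu : {measure set T -> \bar R}).

Lemma le_integral_nneg_majorant (D : set T) (f h : T -> \bar R) :
  (forall t, D t -> 0 <= h t) -> (forall t, D t -> f t <= h t) ->
  \int[mu]_(t in D) f t <= \int[mu]_(t in D) h t.
Proof.
move=> h0 fh; rewrite integralE.
apply: (@le_trans _ _ (\int[mu]_(t in D) f^\+ t)).
  rewrite -[leRHS]sube0; apply: leeB => //.
  by apply: integral_ge0 => t _; exact: funeneg_ge0.
rewrite ge0_integralE; last by move=> t _; exact: funepos_ge0.
rewrite ge0_integralE//; apply: ereal_sup_le => _ [g /= gf <-]; exists g => //= t.
apply: (le_trans (gf t)); rewrite /patch; case: ifPn => // /[!inE] Dt.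
by rewrite funeposE ge_max fh//= h0.
Qed.

End integral_majorant.

Lemma disj_itv_adjacent (R : realType) (x : itv_bound R) (b c : R) :
  [disjoint [set` Interval x (BRight b)] & `]b, c]].
Proof.
apply: lt_disjoint => u v; rewrite !in_itv /= => /andP[_ ub] /andP[bv _].
exact: le_lt_trans ub bv.
Qed.

Lemma exists_natr_ge (R : archiRealFieldType) (x : R) : exists n : nat, x <= n%:R.
Proof.
have [x0|x0] := leP 0 x; last by exists 0%N; exact: ltW.
by exists (Num.bound x); exact/ltW/archi_boundP.
Qed.

Section completed_lebesgue_measure.
Context {R : realType}.
Local Notation L := (LebR R).
Local Notation mu := (@leb R).

Lemma leb_measurable_itv (i : interval R) : measurable ([set` i] : set L).
Proof. by apply: sub_caratheodory; exact: measurable_itv. Qed.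

Lemma leb_measurable_fun (D : set L) (f : R -> R) :
  measurable_fun [set: R] f -> measurable_fun D (f : L -> R).
Proof.
move=> mf; apply: (measurableT_comp (f := f) (g := fun t : L => t : R)) => //.
by move=> mD B mB; apply: measurableI => //; exact: sub_caratheodory.
Qed.

Lemma leb_itv_oc (a b : R) : a <= b -> mu `]a, b] = (b - a)%:E.
Proof.
move=> ab; rewrite -[LHS]/(lebesgue_measure _) lebesgue_measure_itv /= lte_fin.
case: ltP => // ba.
have -> : b = a by apply/eqP; rewrite eq_le ab ba.
by rewrite subrr.
Qed.

Lemma leb_set1 (a : R) : mu [set a] = 0%E.
Proof. exact: lebesgue_measure_set1. Qed.

Lemma integral_cst_itv_oc (a b k : R) : a <= b ->
  (\int[mu]_(_ in `]a, b]) k%:E = (k * (b - a))%:E)%E.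
Proof.
move=> ab; rewrite integral_cst; last exact: leb_measurable_itv.
by rewrite -[X in (_ * X)%E]/(mu _) leb_itv_oc// -EFinM.
Qed.

Lemma integrable_cst_itv_oc (a b k : R) : a <= b ->
  mu.-integrable (`]a, b] : set L) (fun _ => k%:E).
Proof.
move=> ab; apply/integrableP; split; first exact: measurable_cst.
under eq_integral do rewrite abse_EFin.
by rewrite integral_cst_itv_oc// ltry.
Qed.

Lemma ge0_integral_itv_cc_oc (a b : R) (f : L -> \bar R) :
  measurable_fun (Icc a b) f -> (forall t, Icc a b t -> 0 <= f t)%E ->
  (\int[mu]_(t in Icc a b) f t = \int[mu]_(t in `]a, b]) f t)%E.
Proof.
move=> mf f0; rewrite (ge0_negligible_integral (N := [set a] : set L))//.
- by rewrite setDitv1l.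
- by apply: sub_caratheodory; exact: measurable_set1.
- exact: leb_measurable_itv.
- exact: leb_set1.
Qed.

Lemma itv_oc_subset_cc0 (a b : R) : 0 <= a -> (`]a, b] : set L) `<=` Icc 0 b.
Proof. by move=> a0; apply: subset_itvScc; rewrite bnd_simp. Qed.

End completed_lebesgue_measure.

Section primitive.
Context {R : realType}.
Local Notation L := (LebR R).
Local Notation mu := (@leb R).
Variables (x0 : R) (g x : L -> R).
Hypothesis g_int : forall t, 0 <= t -> mu.-integrable (Icc 0 t) (EFin \o g).
Hypothesis x_def : forall t, 0 <= t ->
  ((x t)%:E = x0%:E + \int[mu]_(s in Icc 0 t) (g s)%:E)%E.

Lemma measurable_rhs (D : set L) (b : R) : 0 <= b -> measurable D ->
  D `<=` Icc 0 b -> measurable_fun D g.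
Proof.
move=> b0 mD Db; apply/measurable_EFinP.
exact: measurable_funS (leb_measurable_itv _) Db (measurable_int _ (g_int b0)).
Qed.

Lemma integrable_rhs_oc (a b : R) : 0 <= a -> a <= b ->
  mu.-integrable (`]a, b] : set L) (EFin \o g).
Proof.
move=> a0 ab; apply: integrableS (g_int (le_trans a0 ab)).
- exact: leb_measurable_itv.
- exact: leb_measurable_itv.
- exact: itv_oc_subset_cc0.
Qed.

Lemma primitive0 : x 0 = x0.
Proof.
have null0 : mu (Icc 0 0) = 0%E by rewrite /Icc set_itv1; exact: leb_set1.
have := x_def (lexx 0).
rewrite (negligible_integral (leb_measurable_itv `[0, 0]) (leb_measurable_itv _)
  (g_int (lexx 0)) null0).
by rewrite setDv integral_set0 adde0 => -[].
Qed.

Lemma integral_rhs_oc (a b : R) : 0 <= a -> a <= b ->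
  (\int[mu]_(s in `]a, b]) (g s)%:E = (x b - x a)%:E)%E.
Proof.
move=> a0 ab; have b0 := le_trans a0 ab.
have := x_def b0; rewrite /Icc (@itv_bndbnd_setU _ _ _ (BRight a)) ?bnd_simp//.
rewrite integral_setU //; first last.
- exact: disj_itv_adjacent.
- rewrite -itv_bndbnd_setU ?bnd_simp//; exact: measurable_int (g_int b0).
- exact: leb_measurable_itv.
- exact: leb_measurable_itv.
rewrite addeA -/(Icc 0 a) -x_def//.
have : (\int[mu]_(s in `]a, b]) (g s)%:E)%E \is a fin_num.
  by apply: integrable_fin_num; [exact: leb_measurable_itv|exact: integrable_rhs_oc].
move: (\int[mu]_(s in `]a, b]) (g s)%:E)%E => -[I _ /= [->]| |]//.
by rewrite addrAC subrr add0r.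
Qed.

Lemma integral_affine_rhs_oc (k l a b : R) : 0 <= a -> a <= b ->
  (\int[mu]_(s in `]a, b]) (k + l * g s)%:E = (k * (b - a) + l * (x b - x a))%:E)%E.
Proof.
move=> a0 ab; have mD := @leb_measurable_itv R `]a, b].
under eq_integral do rewrite EFinD EFinM.
rewrite (integralD mD (integrable_cst_itv_oc _ ab)); last first.
  exact: integrableZl (integrable_rhs_oc a0 ab).
by rewrite integralZl ?integral_cst_itv_oc ?integral_rhs_oc ?integrable_rhs_oc.
Qed.

Lemma primitive_lipschitz (a b K : R) : 0 <= a -> a <= b ->
  (forall u, a < u <= b -> `|g u| <= K) -> `|x b - x a| <= K * (b - a).
Proof.
move=> a0 ab gK; have mD := @leb_measurable_itv R `]a, b].
have mg := measurable_rhs (le_trans a0 ab) mD (itv_oc_subset_cc0 a0).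
rewrite -lee_fin -abse_EFin -integral_rhs_oc// -integral_cst_itv_oc//.
apply: le_trans (le_abse_integral _ mD _) _; first exact/measurable_EFinP.
apply: ge0_le_integral => //.
- exact: measurable_int (integrable_abse (integrable_rhs_oc a0 ab)).
Qed.

Lemma primitive_bounded (t : R) : 0 <= t ->
  exists M, forall s, 0 <= s <= t -> `|x s| <= M.
Proof.
move=> t0; have abs_fin := integrable_fin_num (leb_measurable_itv _)
  (integrable_abse (g_int t0)).
exists (`|x0| + fine (\int[mu]_(s in Icc 0 t) `|(g s)%:E|)%E) => s /andP[s0 st].
have xs : (x s - x0)%:E = (\int[mu]_(u in Icc 0 s) (g u)%:E)%E.
  by rewrite EFinB x_def// addeAC subee// add0e.
have : `|x s - x0| <= fine (\int[mu]_(s in Icc 0 t) `|(g s)%:E|)%E.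
  rewrite -lee_fin fineK// -abse_EFin xs.
  have sub0 : Icc 0 s `<=` Icc 0 t by apply: subset_itvScc; rewrite bnd_simp.
  apply: le_trans (le_abse_integral _ (leb_measurable_itv _) _) _.
    exact/measurable_EFinP/(measurable_rhs t0 (leb_measurable_itv _) sub0).
  apply: ge0_subset_integral => //; try exact: leb_measurable_itv.
  exact: measurable_int (integrable_abse (g_int t0)).
by have := ler_normD (x s - x0) x0; rewrite subrK; lra.
Qed.

Section positivity.
Variables (t K : R).
Hypotheses (x0_gt0 : 0 < x0) (K_gt0 : 0 < K).
Hypothesis g_le : forall s, 0 <= s <= t -> `|g s| <= K * `|x s|.

Let h := (4 * K)^-1.

Lemma primitive_gt0_step (r s : R) : 0 <= r -> r <= s <= r + h -> s <= t ->
  0 < x r -> 0 < x s.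
Proof.
move=> r0 /andP[rs srh] st xr_gt0.
have [M xM] := primitive_bounded (le_trans (le_trans r0 rs) st).
pose dev := [set `|x u - x r| | u in [set u | r <= u <= s]].
have dev_sup : has_sup dev.
  split; first by exists `|x r - x r|, r => //=; rewrite lexx rs.
  exists (M + M) => _ [u /andP[ru us] <-]; apply: le_trans (ler_normB _ _) _.
  apply: lerD; apply: xM; first by rewrite (le_trans r0 ru) (le_trans us st).
  by rewrite r0 (le_trans rs st).
pose D := sup dev.
have devD u : r <= u <= s -> `|x u - x r| <= D.
  by move=> rus; apply: sup_upper_bound => //; exists u.
have D0 : 0 <= D by have := devD r; rewrite subrr normr0 lexx rs; apply.
(* The deviation [D] of [x] from [x r] on [[r, s]] is at most
   [K (x r + D) (s - r) <= (x r + D) / 4], hence [D <= x r / 3]. *)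
have D_le : D <= (x r + D) / 4.
  apply: ge_sup; first exact: dev_sup.1.
  move=> _ [u /andP[ru us] <-].
  apply: le_trans (primitive_lipschitz (K := K * (x r + D)) r0 ru _) _.
    move=> v /andP[rv vu]; have v0 : 0 <= v := ltW (le_lt_trans r0 rv).
    have vt : 0 <= v <= t by rewrite v0 (le_trans vu (le_trans us st)).
    apply: le_trans (g_le vt) _; rewrite ler_wpM2l ?(ltW K_gt0)//.
    have := ler_normD (x v - x r) (x r); rewrite subrK (gtr0_norm xr_gt0).
    have := devD v; rewrite (ltW rv) (le_trans vu us) => /(_ isT); lra.
  have -> : (x r + D) / 4 = K * (x r + D) * h.
    by rewrite /h; field; rewrite gt_eqF.
  by rewrite ler_wpM2l ?mulr_ge0 ?(ltW K_gt0) ?addr_ge0 ?(ltW xr_gt0)//; lra.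
have := devD s; rewrite rs lexx => /(_ isT); rewrite ler_norml => /andP[+ _].
lra.
Qed.

Lemma primitive_gt0 (s : R) : 0 <= s <= t -> 0 < x s.
Proof.
have h_gt0 : 0 < h by rewrite invr_gt0 mulr_gt0.
suff gt0_upto k : forall s, 0 <= s <= t -> s <= k%:R * h -> 0 < x s.
  move=> /andP[s0 st]; have [k tk] := exists_natr_ge (t / h).
  apply: (gt0_upto k); rewrite ?s0 ?st//.
  by apply: le_trans st _; rewrite -ler_pdivrMr.
elim: k => [|k IH] {}s /andP[s0 st] sk.
  move: sk; rewrite mul0r => s_le0.
  by rewrite (@le_anti _ _ s 0) ?s0 ?s_le0// primitive0.
have [sk_le|ks] := leP s (k%:R * h); first by apply: IH; rewrite ?s0.
have kh0 : 0 <= k%:R * h by rewrite mulr_ge0 // ltW.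
apply: (primitive_gt0_step kh0) => //.
  by rewrite (ltW ks) -[k.+1]addn1 natrD mulrDl mul1r in sk *.
by apply: IH; rewrite ?kh0 ?(le_trans (ltW ks) st).
Qed.

End positivity.

End primitive.

Section tail_bound.
Context {R : realType}.
Variables (delta c : R).
Hypotheses (delta_gt0 : 0 < delta) (c_ge0 : 0 <= c).

Let m := c + (2 * delta)^-1.
Let q := expR (- (delta / 2)).

(* Normalised so that [tail_bound a - tail_bound (a + 1) = m * expR (- (delta / 2 * a))];
   [tail_bound_step] then reduces to [expRN_affine_le]. *)
Definition tail_bound (a : R) : R := m / (1 - q) * expR (- (delta / 2 * a)).

Let m_gt0 : 0 < m.
Proof. by rewrite /m ltr_wpDl ?invr_gt0 ?mulr_gt0. Qed.

Let q_lt1 : q < 1.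
Proof. by rewrite expR_lt1 oppr_lt0 divr_gt0. Qed.

Lemma tail_bound_gt0 (a : R) : 0 < tail_bound a.
Proof. by rewrite mulr_gt0 ?expR_gt0 ?divr_gt0 ?subr_gt0. Qed.

Lemma tail_bound_decr : {homo tail_bound : s t /~ s < t}.
Proof.
move=> s t st; rewrite ltr_pM2l ?divr_gt0 ?subr_gt0// ltr_expR ltrN2.
by rewrite ltr_pM2l ?divr_gt0.
Qed.

Lemma expRN_affine_le (a : R) : 0 <= a ->
  expR (- (delta / 2 * a)) * (c + a / 4) <= m.
Proof.
move=> a0; rewrite expRN mulrC ler_pdivrMr ?expR_gt0//.
apply: le_trans (ler_wpM2l (ltW m_gt0) (expR_ge1Dx _)).
rewrite /m mulrDl !mulrDr !mulr1.
have -> : (2 * delta)^-1 * (delta / 2 * a) = a / 4 by field; rewrite gt_eqF.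
have : 0 <= c * (delta / 2 * a) by rewrite mulr_ge0 ?mulr_ge0 ?divr_ge0 ?(ltW delta_gt0).
have : 0 < (2 * delta)^-1 by rewrite invr_gt0 mulr_gt0.
lra.
Qed.

Lemma tail_bound_step (a : R) : 0 <= a ->
  expR (- delta * a) * (c + a / 4) + tail_bound (a + 1) <= tail_bound a.
Proof.
move=> a0; set e := expR (- (delta / 2 * a)).
have ee : expR (- delta * a) = e * e.
  by rewrite /e -expRD -opprD -mulrDl -splitr mulNr.
have next : tail_bound (a + 1) = tail_bound a - m * e.
  rewrite /tail_bound mulrDr mulr1 opprD expRD -/q -/e.
  set C := m / (1 - q).
  have <- : C * (1 - q) = m by rewrite divfK // subr_eq0 (gt_eqF q_lt1).
  ring.
have := ler_wpM2l (expR_ge0 (- (delta / 2 * a))) (expRN_affine_le a0).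
rewrite -/e mulrA.
by rewrite ee next [e * m]mulrC; lra.
Qed.

Lemma tail_bound_cvg0 : tail_bound t @[t --> +oo] --> 0.
Proof.
rewrite -(mulr0 (m / (1 - q))); apply: cvgMl_tmp.
apply: (@cvg_comp _ _ _ (fun t => delta / 2 * t) (fun x => expR (- x)) _ +oo%R);
  last exact: cvgr_expR.
by apply/cvgryPge => A; near=> t; rewrite -ler_pdivrMl ?divr_gt0.
Unshelve. all: end_near.
Qed.

End tail_bound.

Section logistic_rhs.
Context {R : realType}.

Definition logistic_rhs (u v : R) : R := u * (1 - u) - v * u.

Lemma logistic_rhs_le (u v : R) : 0 <= u -> 0 <= v -> logistic_rhs u v <= 4^-1.
Proof.
move=> u0 v0; have := sqr_ge0 (u - 2^-1); have := mulr_ge0 v0 u0.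
rewrite /logistic_rhs; nra.
Qed.

Lemma lnD_le_logistic_rhs (u v : R) : 0 < u -> 0 < v ->
  ln u + ln v <= 4^-1 - logistic_rhs u v.
Proof.
move=> u0 v0; have uv0 := mulr_gt0 u0 v0.
have := @le_ln1Dx R (u * v - 1); rewrite subrKC lnM ?posrE// => /(_ ltac:(lra)).
by have := sqr_ge0 (u - 2^-1); rewrite /logistic_rhs; nra.
Qed.

End logistic_rhs.

Section logistic_solution.
Context {R : realType}.
Local Notation L := (LebR R).
Local Notation mu := (@leb R).
Variables (x0 : R) (x y : L -> R).
Hypotheses (x0_gt0 : 0 < x0) (xy_adm : admissible x0 x y).

Let g (s : L) : R := logistic_rhs (x s) (y s).

Let y_gt0 (t : R) : 0 <= t -> 0 < y t.
Proof. by case: xy_adm => -[_ [+ _] _]; apply. Qed.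

Let g_int (t : R) : 0 <= t -> mu.-integrable (Icc 0 t) (EFin \o g).
Proof. by move=> t0; case: xy_adm => _ /(_ t t0) []. Qed.

Let x_def (t : R) : 0 <= t ->
  ((x t)%:E = x0%:E + \int[mu]_(s in Icc 0 t) (g s)%:E)%E.
Proof. by move=> t0; case: xy_adm => _ /(_ t t0) []. Qed.

Lemma logistic_solution_gt0 (t : R) : 0 <= t -> 0 < x t.
Proof.
move=> t0; have [M xM] := primitive_bounded g_int x_def t0.
have [My yM] : exists My, forall s, 0 <= s <= t -> y s <= My.
  by case: xy_adm => -[_ [_ +]] _; apply.
have M_ge0 : 0 <= M.
  by apply: le_trans (normr_ge0 (x 0)) (xM _ _); rewrite lexx t0.
have My_ge0 : 0 <= My.
  by apply/ltW/(lt_le_trans (y_gt0 (lexx 0)))/yM; rewrite lexx t0.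
apply: (primitive_gt0 g_int x_def (t := t) (K := 1 + M + My)); rewrite ?t0 ?lexx//.
- by rewrite ltr_wpDr// ltr_wpDr.
- move=> s /andP[s0 st].
  have -> : g s = x s * (1 - x s - y s) by rewrite /g /logistic_rhs; ring.
  rewrite normrM mulrC ler_wpM2r//.
  have := xM s; have := yM s; have := y_gt0 s0; rewrite s0 st /=.
  move=> ? /(_ isT) ? /(_ isT); rewrite !ler_norml => /andP[? ?].
  by apply/andP; split; lra.
Qed.

Lemma logistic_solution_le (t : R) : 0 <= t -> x t <= x0 + t / 4.
Proof.
move=> t0; rewrite -lerBlDl -lee_fin -(primitive0 g_int x_def).
rewrite -(integral_rhs_oc g_int x_def) ?lexx//.
have -> : (t / 4)%:E = (\int[mu]_(s in `]0%R, t]) (4^-1)%:E)%E.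
  by rewrite integral_cst_itv_oc// subr0 mulrC.
apply: le_integral; first exact: leb_measurable_itv.
- exact: (integrable_rhs_oc g_int).
- exact: integrable_cst_itv_oc.
move=> s; rewrite inE /= in_itv /= => /andP[s0 _]; have := ltW s0 => {}s0.
by rewrite lee_fin logistic_rhs_le ?(ltW (y_gt0 s0)) ?(ltW (logistic_solution_gt0 s0)).
Qed.

Variable delta : R.
Hypothesis delta_gt0 : 0 < delta.

Let c := 4^-1 + x0.

Let c_ge0 : 0 <= c.
Proof. by rewrite addr_ge0 ?invr_ge0// ltW. Qed.

Let majorant (s : L) : R := expR (- delta * s) * (4^-1 - g s).

Let majorant_ge0 (s : R) : 0 <= s -> 0 <= majorant s.
Proof.
move=> s0; rewrite mulr_ge0 ?expR_ge0// subr_ge0 logistic_rhs_le//.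
  exact/ltW/logistic_solution_gt0.
exact/ltW/y_gt0.
Qed.

Let measurable_majorant (D : set L) (b : R) : 0 <= b -> measurable D ->
  D `<=` Icc 0 b -> measurable_fun D majorant.
Proof.
move=> b0 mD Db; apply: measurable_funM.
  by apply: leb_measurable_fun; apply: measurableT_comp => //; exact: measurable_funM.
apply: measurable_funB => //; exact (measurable_rhs g_int b0 mD Db).
Qed.

Lemma integral_majorant_unit (a b : R) : 0 <= a -> a < b -> b <= a + 1 ->
  (\int[mu]_(s in `]a, b]) (majorant s)%:E
    <= (expR (- delta * a) * (c + a / 4))%:E)%E.
Proof.
move=> a0 ab ba1; have b0 := le_trans a0 (ltW ab); set k := expR (- delta * a).
have mD := @leb_measurable_itv R `]a, b].
apply: (@le_trans _ _ (\int[mu]_(s in `]a, b]) (k / 4 + - k * g s)%:E)%E).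
  apply: ge0_le_integral => //.
  - move=> s /= /[!in_itv] /andP[/ltW/(le_trans a0) s0 _].
    by rewrite lee_fin majorant_ge0.
  - apply/measurable_EFinP.
    exact (measurable_majorant b0 mD (itv_oc_subset_cc0 a0)).
  - apply/measurable_EFinP/measurable_funD => //; apply: measurable_funM => //.
    exact (measurable_rhs g_int b0 mD (itv_oc_subset_cc0 a0)).
  - move=> s /= /[!in_itv] /andP[/ltW a_s _]; have s0 := le_trans a0 a_s.
    have -> : k / 4 + - k * g s = k * (4^-1 - g s) by ring.
    rewrite lee_fin ler_wpM2r ?ler_expR ?mulNr ?lerN2 ?ler_wpM2l ?(ltW delta_gt0)//.
    by rewrite subr_ge0 logistic_rhs_le// ltW ?logistic_solution_gt0 ?y_gt0.
rewrite (integral_affine_rhs_oc g_int x_def) ?(ltW ab)// lee_fin.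
have -> : k / 4 * (b - a) + - k * (x b - x a) = k * ((b - a) / 4 - (x b - x a)).
  by ring.
rewrite ler_wpM2l ?expR_ge0//.
have := logistic_solution_gt0 b0; have := logistic_solution_le a0; rewrite /c; lra.
Qed.

Lemma integral_majorant_le_tail (n : nat) (a b : R) :
  0 <= a -> a < b -> b <= a + n%:R ->
  (\int[mu]_(s in `]a, b]) (majorant s)%:E <= (tail_bound delta c a)%:E)%E.
Proof.
elim: n a => [|n IH] a a0 ab bn.
  by move: bn; rewrite addr0 => /(lt_le_trans ab); rewrite ltxx.
have step := tail_bound_step delta_gt0 c_ge0 a0.
have next_gt0 := tail_bound_gt0 delta_gt0 c_ge0 (a + 1).
have [ba1|a1b] := leP b (a + 1).
  by apply: le_trans (integral_majorant_unit a0 ab ba1) _; rewrite lee_fin; lra.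
have b0 : 0 <= b by lra.
have split : (`]a, b]%classic : set L) = `]a, a + 1] `|` `]a + 1, b].
  by rewrite -itv_bndbnd_setU ?bnd_simp ?lerDl ?(ltW a1b).
rewrite split ge0_integral_setU -?split; first last.
- exact: disj_itv_adjacent.
- move=> s /= /[!in_itv] /andP[/ltW/(le_trans a0) s0 _].
  by rewrite lee_fin majorant_ge0.
- apply/measurable_EFinP.
  exact (measurable_majorant b0 (leb_measurable_itv _) (itv_oc_subset_cc0 a0)).
- exact: leb_measurable_itv.
- exact: leb_measurable_itv.
have unit := integral_majorant_unit a0 (ltr_pwDr ltr01 (lexx a)) (lexx (a + 1)).
have rest : (\int[mu]_(s in `](a + 1)%R, b]) (majorant s)%:E
    <= (tail_bound delta c (a + 1))%:E)%E.
  by apply: IH; [lra | exact: a1b | move: bn; rewrite -natr1; lra].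
by apply: le_trans (leeD unit rest) _; rewrite -EFinD lee_fin; lra.
Qed.

Lemma discounted_payoff_le_tail (T T' : R) : 0 <= T -> T < T' ->
  (\int[mu]_(t in Icc T T') (expR (- delta * t) * (ln (x t) + ln (y t)))%:E
    <= (tail_bound delta c T)%:E)%E.
Proof.
move=> T0 TT'; have T'0 := le_trans T0 (ltW TT').
have ITt t : Icc T T' t -> 0 <= t by rewrite /Icc /= in_itv => /andP[/(le_trans T0)].
apply: (@le_trans _ _ (\int[mu]_(t in Icc T T') (majorant t)%:E)%E).
  apply: le_integral_nneg_majorant => t /ITt t0; first by rewrite lee_fin majorant_ge0.
  rewrite lee_fin ler_wpM2l ?expR_ge0//.
  by rewrite lnD_le_logistic_rhs ?logistic_solution_gt0 ?y_gt0.
rewrite ge0_integral_itv_cc_oc; last 2 first.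
- have sub : Icc T T' `<=` Icc 0 T' by apply: subset_itvScc; rewrite bnd_simp.
  apply/measurable_EFinP.
  exact (measurable_majorant T'0 (leb_measurable_itv _) sub).
- by move=> t /ITt t0; rewrite lee_fin majorant_ge0.
have [n Tn] := exists_natr_ge (T' - T).
by apply: (integral_majorant_le_tail (n := n)) => //; lra.
Qed.

End logistic_solution.

Theorem lemma7p1 (R : realType) (delta x0 : R) (hdelta : 0 < delta) (hx0 : 0 < x0) :
  exists omega : R -> R,
    (forall s t : R, 0 <= s -> s < t -> omega t < omega s) /\
    (forall t : R, 0 <= t -> 0 < omega t) /\
    (omega t @[t --> +oo] --> (0 : R)) /\
    (forall x y : LebR R -> R, admissible x0 x y ->
       forall T T' : R, 0 <= T -> T < T' ->
         (\int[@leb R]_(t in (Icc T T'))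
            (expR (- delta * t) * (ln (x t) + ln (y t)))%:E < (omega T)%:E)%E).
Proof.
have c_ge0 : 0 <= 4^-1 + x0 by rewrite addr_ge0 ?invr_ge0// ltW.
exists (fun t => 2 * tail_bound delta (4^-1 + x0) t); split; [|split; [|split]].
- by move=> s t _ st; rewrite ltr_pM2l//; exact: tail_bound_decr.
- by move=> t _; rewrite mulr_gt0// tail_bound_gt0.
- by rewrite -(mulr0 2); apply: cvgMl_tmp; exact: tail_bound_cvg0.
- move=> x y xy_adm T T' T0 TT'.
  apply: le_lt_trans (discounted_payoff_le_tail hx0 xy_adm hdelta T0 TT') _.
  by rewrite lte_fin ltr_pMl ?ltr1n// tail_bound_gt0.
Qed.
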